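(* For any integers $r,t\ge 3$, $(K_r\times K_t)_{SR}\cong K_r\square K_t$.
   Context: $K_n$ is the complete graph on $n$ vertices. The direct product $G\times H$ has vertex set $V(G)\times V(H)$, with $(a,b)\sim(c,d)$ iff $ac\in E(G)$ and $bd\in E(H)$; the Cartesian product $G\square H$ has vertex set $V(G)\times V(H)$, with $(a,b)\sim(c,d)$ iff ($a=c$ and $bd\in E(H)$) or ($b=d$ and $ac\in E(G)$). For a connected graph $F$ with distance $d_F$, a vertex $u$ is maximally distant from $v$ if $d_F(v,w)\le d_F(u,v)$ for every neighbor $w$ of $u$; distinct $u,v$ are mutually maximally distant if each is maximally distant from the other; the boundary $\partial(F)$ is the set of vertices mutually maximally distant with some vertex; the strong resolving graph $F_{SR}$ has vertex set $\partial(F)$, two vertices adjacent iff they are mutually maximally distant in $F$. *)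

From mathcomp Require Import all_boot.
Set Implicit Arguments. Unset Strict Implicit. Unset Printing Implicit Defensive.

Section Graphs.
Variable T : finType.
Implicit Types (e : rel T) (u v w : T).

Definition walk_of_len e k u v : bool :=
  [exists p : k.-tuple T, path e u p && (last u p == v)].

(* distance: least k with a walk of length k from u to v; for a connected
   graph this is the usual graph distance (always < #|T|).  If no walk exists
   the value #|T| is returned (irrelevant for connected graphs). *)
Definition dist e u v : nat :=
  find (fun k => walk_of_len e k u v) (iota 0 #|T|).

Definition connected_graph e : Prop := forall u v, connect e u v.

Definition max_distant e u v : bool :=
  [forall w, e u w ==> (dist e v w <= dist e u v)].

Definition mmd e u v : bool :=
  [&& u != v, max_distant e u v & max_distant e v u].

(* boundary = vertex set of the strong resolving graph *)
Definition boundary e : {set T} := [set u | [exists v, mmd e u v]].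
End Graphs.

Definition complete (n : nat) : rel 'I_n := fun a b => a != b.

Definition dirprod (T1 T2 : finType) (e1 : rel T1) (e2 : rel T2) : rel (T1 * T2) :=
  fun x y => e1 x.1 y.1 && e2 x.2 y.2.

Definition cartprod (T1 T2 : finType) (e1 : rel T1) (e2 : rel T2) : rel (T1 * T2) :=
  fun x y => ((x.1 == y.1) && e2 x.2 y.2) || ((x.2 == y.2) && e1 x.1 y.1).

Definition iso_to_induced (S T : finType) (e2 : rel S) (A : {set T}) (e1 : rel T)
  : Prop :=
  exists f : S -> T,
    [/\ injective f, f @: [set: S] = A & forall x y, e2 x y = e1 (f x) (f y)].

(* F_SR is isomorphic to H : vertex set boundary F, edges = mmd in F *)
Definition SR_iso (S T : finType) (F : rel T) (H : rel S) : Prop :=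
  iso_to_induced H (boundary F) (mmd F).
Arguments complete n : clear implicits.

(* The direct product K_r x K_t (r, t >= 3) has diameter 2: two vertices are
   adjacent iff they differ in both coordinates, and any two vertices have a
   common neighbour, since each coordinate has a third value to move to.  In a
   graph of diameter 2 every pair of distinct non-adjacent vertices is
   mutually maximally distant, while adjacent u, v are not as soon as u has a
   neighbour w at distance 2 from v.  In K_r x K_t such a w always exists, so
   the strong resolving graph lives on all vertices and is the complement of
   K_r x K_t, which is exactly K_r [] K_t. *)
From mathcomp Require Import all_boot.
Set Implicit Arguments. Unset Strict Implicit. Unset Printing Implicit Defensive.

Section Distance.
Variables (T : finType) (e : rel T).
Implicit Types u v w : T.

Lemma walk_of_len0 u v : walk_of_len e 0 u v = (u == v).
Proof.
apply/existsP/eqP => [[[[|//] _] /= /eqP //]|<-].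
by exists [tuple]; rewrite /= eqxx.
Qed.

Lemma walk_of_len1 u v : walk_of_len e 1 u v = e u v.
Proof.
apply/existsP/idP => [[[[|x [|//]] //]] /= _ /andP[/andP[euv _] /eqP <-] //|euv].
by exists [tuple v]; rewrite /= euv eqxx.
Qed.

Lemma walk_of_len2 u w v : e u w -> e w v -> walk_of_len e 2 u v.
Proof. by move=> euw ewv; apply/existsP; exists [tuple w; v]; rewrite /= euw ewv eqxx. Qed.

Lemma dist_le_walk k u v : walk_of_len e k u v -> k < #|T| -> dist e u v <= k.
Proof.
move=> walk_k k_lt; rewrite leqNgt; apply/negP => lt_k_dist.
by have := before_find 0 lt_k_dist; rewrite nth_iota // add0n walk_k.
Qed.

Lemma dist_ge_no_walk m u v :
  m <= #|T| -> (forall k, k < m -> ~~ walk_of_len e k u v) -> m <= dist e u v.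
Proof.
move=> m_le no_walk; rewrite leqNgt; apply/negP => lt_dist_m.
have : has (fun k => walk_of_len e k u v) (iota 0 #|T|).
  by rewrite has_find size_iota (leq_trans lt_dist_m).
move/(nth_find 0); rewrite nth_iota ?add0n; last exact: leq_trans lt_dist_m m_le.
by apply/negP/no_walk.
Qed.

Lemma dist_ge2 u v : 2 <= #|T| -> u != v -> ~~ e u v -> 2 <= dist e u v.
Proof.
move=> card_ge2 neq_uv not_euv; apply: dist_ge_no_walk => // -[|[|//]] _.
  by rewrite walk_of_len0.
by rewrite walk_of_len1.
Qed.

Section DiameterTwo.
Hypothesis e_sym : symmetric e.
Hypothesis card_gt2 : 2 < #|T|.
Hypothesis walk2 : forall u v, walk_of_len e 2 u v.

Lemma dist_le2 u v : dist e u v <= 2.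
Proof. exact: dist_le_walk. Qed.

Lemma max_distant_nonadj u v : u != v -> ~~ e u v -> max_distant e u v.
Proof.
move=> neq_uv not_euv; apply/forallP => w; apply/implyP => _.
exact: leq_trans (dist_le2 v w) (dist_ge2 (ltnW card_gt2) neq_uv not_euv).
Qed.

Lemma not_max_distant_adj u v w :
  e u v -> e u w -> v != w -> ~~ e v w -> ~~ max_distant e u v.
Proof.
move=> euv euw neq_vw not_evw; apply/forallP => /(_ w); rewrite euw /=.
apply/negP; rewrite -ltnNge.
apply: leq_trans (dist_ge2 (ltnW card_gt2) neq_vw not_evw).
by rewrite ltnS dist_le_walk ?walk_of_len1 // (ltn_trans _ card_gt2).
Qed.

Hypothesis far_neighbour :
  forall u v, e u v -> exists w, [&& e u w, v != w & ~~ e v w].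

Lemma mmd_diam2 u v : mmd e u v = (u != v) && ~~ e u v.
Proof.
rewrite /mmd; have [euv | not_euv] /= := boolP (e u v).
  have [w /and3P[euw neq_vw not_evw]] := far_neighbour euv.
  by rewrite (negbTE (not_max_distant_adj euv euw neq_vw not_evw)) !andbF.
have [neq_uv /= |//] := boolP (u != v).
by rewrite !max_distant_nonadj // 1?eq_sym // e_sym.
Qed.

Lemma boundary_diam2 : (forall u, exists v, (u != v) && ~~ e u v) ->
  boundary e = [set: T].
Proof.
move=> has_nonneighbour; apply/setP => u; rewrite !inE.
by have [v nonadj] := has_nonneighbour u; apply/existsP; exists v; rewrite mmd_diam2.
Qed.

End DiameterTwo.
End Distance.

Lemma ord_avoid2 n (a c : 'I_n) : 3 <= n -> exists x : 'I_n, (x != a) && (x != c).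
Proof.
move=> n_ge3; have lt_card : #|[set a; c]| < #|'I_n|.
  by rewrite cards2 card_ord (leq_ltn_trans _ n_ge3) // ltnS leq_b1.
have : ~~ ([set: 'I_n] \subset [set a; c]).
  by apply: contraL lt_card => /subset_leq_card; rewrite cardsT -leqNgt.
by case/subsetPn => x _; rewrite !inE negb_or; exists x.
Qed.

Section CompleteProduct.
Variables r t : nat.
Hypotheses (r_ge3 : 3 <= r) (t_ge3 : 3 <= t).

Let e := dirprod (complete r) (complete t).

Lemma dirprod_completeE x y : e x y = (x.1 != y.1) && (x.2 != y.2).
Proof. by []. Qed.

Lemma dirprod_complete_sym : symmetric e.
Proof. by move=> x y; rewrite !dirprod_completeE eq_sym [y.2 == _]eq_sym. Qed.

Lemma dirprod_complete_card : 2 < #|{: 'I_r * 'I_t}|.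
Proof. by rewrite card_prod !card_ord (leq_trans _ (leq_mul r_ge3 t_ge3)). Qed.

Lemma dirprod_complete_walk2 x y : walk_of_len e 2 x y.
Proof.
have [a /andP[a1 a2]] := ord_avoid2 x.1 y.1 r_ge3.
have [b /andP[b1 b2]] := ord_avoid2 x.2 y.2 t_ge3.
apply: (walk_of_len2 (w := (a, b))); rewrite dirprod_completeE /= ?a2 ?b2 //.
by rewrite ![x.1 == _]eq_sym ![x.2 == _]eq_sym a1 b1.
Qed.

Lemma dirprod_complete_far_neighbour x y :
  e x y -> exists z, [&& e x z, y != z & ~~ e y z].
Proof.
case: x y => [a b] [c d]; rewrite dirprod_completeE => /andP[ac bd] /=.
have [b' /andP[b'b b'd]] := ord_avoid2 b d t_ge3.
exists (c, b'); rewrite !dirprod_completeE /= ac eq_sym b'b xpair_eqE eqxx /=.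
by rewrite eq_sym b'd.
Qed.

Lemma dirprod_complete_nonneighbour x : exists y, (x != y) && ~~ e x y.
Proof.
have [b /andP[b1 _]] := ord_avoid2 x.2 x.2 t_ge3.
exists (x.1, b); rewrite dirprod_completeE /= eqxx andbT.
by case: x b1 => a c /= b1; rewrite xpair_eqE eqxx eq_sym.
Qed.

Lemma cartprod_completeE x y :
  cartprod (complete r) (complete t) x y = (x != y) && ~~ e x y.
Proof.
case: x y => [a b] [c d]; rewrite dirprod_completeE /cartprod /complete /= xpair_eqE.
by case: (a == c); case: (b == d).
Qed.

End CompleteProduct.

Theorem lemma32 (r t : nat) :
  3 <= r -> 3 <= t ->
  SR_iso (dirprod (complete r) (complete t)) (cartprod (complete r) (complete t)).
Proof.
move=> r_ge3 t_ge3.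
have e_sym := @dirprod_complete_sym r t.
have card_gt2 := dirprod_complete_card r_ge3 t_ge3.
have walk2 := dirprod_complete_walk2 r_ge3 t_ge3.
exists id; split => //.
- rewrite imset_id (boundary_diam2 e_sym card_gt2 walk2) //.
    exact: dirprod_complete_far_neighbour.
  exact: dirprod_complete_nonneighbour.
- move=> x y; rewrite mmd_diam2 //; first exact: cartprod_completeE.
  exact: dirprod_complete_far_neighbour.
Qed.
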